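(* Let $k$ be an odd positive integer and write $k=ff'$ with positive integers $f,f'$ such that $1<f<k$. If there exist coprime integers $x,y$ with $x^2-(k^2+1)y^2=f'^2$, then $f'$ is not a prime power (i.e. $f'$ is not of the form $p^a$ with $p$ prime and $a\ge 1$). *)

From Stdlib Require Import ZArith Znumtheory.
Open Scope Z_scope.

Definition is_prime_power (n : Z) : Prop :=
  exists p a : Z, prime p /\ 1 <= a /\ n = p ^ a.

From Stdlib Require Import ZArith Znumtheory Zpow_facts Zwf Lia.
Open Scope Z_scope.

(* Write D = k^2 + 1 and N(X, Y) = X^2 - D Y^2.  The key fact is a descent
   for this Pell form: if gcd(X, Y) = 1 and |N(X, Y)| <= k then
   |N(X, Y)| = 1.  Indeed the automorphism
     (X, Y) |-> (-k X + D Y, X - k Y)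
   of the form (multiplication by the unit k - sqrt D) negates N, preserves
   coprimality and, when |N| <= k, strictly decreases |Y|; at Y = 0 the
   value of N is X^2 = 1.

   For the lemma, suppose f' = p^a.  If f' <= f then N(x, y) = f'^2 <= k,
   so f'^2 = 1, absurd.  If f < f', then p is odd (it divides the odd k) and
   (x - y)(x + y) = f'^2 (1 + f^2 y^2); as p cannot divide both factors,
   p^(2a) = f'^2 divides x - y' for y' = +-y.  Writing x - y' = t f'^2 one
   gets the coprime solution N(f^2 y' - t, t) = -f^2, and f^2 < f f' = k,
   so the descent forces f^2 = 1, contradicting f > 1. *)

Definition pell_norm (k X Y : Z) : Z := X ^ 2 - (k ^ 2 + 1) * Y ^ 2.

Lemma pell_norm_abs (k X Y : Z) : pell_norm k (Z.abs X) (Z.abs Y) = pell_norm k X Y.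
Proof. unfold pell_norm; rewrite !Z.pow_2_r, !Z.abs_square; reflexivity. Qed.

Lemma gcd_one_transfer (X Y X' Y' : Z) :
  Z.gcd X Y = 1 ->
  (forall d, (d | X') -> (d | Y') -> (d | X) /\ (d | Y)) ->
  Z.gcd X' Y' = 1.
Proof.
  intros Hg Hdiv. apply Z.gcd_unique; [lia | apply Z.divide_1_l | apply Z.divide_1_l |].
  intros d H1 H2. destruct (Hdiv d H1 H2) as [HX HY].
  rewrite <- Hg. now apply Z.gcd_greatest.
Qed.

Section PellDescent.

Variable k : Z.
Hypothesis k_pos : 1 <= k.

Definition descend_X (X Y : Z) : Z := - k * X + (k ^ 2 + 1) * Y.
Definition descend_Y (X Y : Z) : Z := X - k * Y.

Lemma pell_norm_descend (X Y : Z) :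
  pell_norm k (descend_X X Y) (descend_Y X Y) = - pell_norm k X Y.
Proof. unfold pell_norm, descend_X, descend_Y; ring. Qed.

(* The descent map is unimodular, so it preserves coprimality. *)
Lemma gcd_descend (X Y : Z) :
  Z.gcd X Y = 1 -> Z.gcd (descend_X X Y) (descend_Y X Y) = 1.
Proof.
  unfold descend_X, descend_Y. intros Hg. apply (gcd_one_transfer X Y); auto.
  intros d H1 H2.
  assert (HY : (d | Y)).
  { replace Y with ((- k * X + (k ^ 2 + 1) * Y) + k * (X - k * Y)) by ring.
    apply Z.divide_add_r; [exact H1 | now apply Z.divide_mul_r]. }
  split; [| exact HY].
  replace X with ((X - k * Y) + k * Y) by ring.
  apply Z.divide_add_r; [exact H2 | now apply Z.divide_mul_r].
Qed.

(* A nonnegative solution with Y > 0 and small norm has X within Y of k Y: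
   otherwise |N| >= 2 k Y^2 - Y^2 > k. *)
Lemma descend_shrinks (X Y : Z) :
  0 <= X -> 0 < Y -> Z.abs (pell_norm k X Y) <= k ->
  Z.abs (descend_Y X Y) < Y.
Proof.
  unfold descend_Y, pell_norm. intros HX HY Hsmall.
  assert (HkY2 : k <= k * Y ^ 2) by nia.
  destruct (Z.le_gt_cases 0 (X - k * Y)).
  - rewrite Z.abs_eq by lia.
    destruct (Z.lt_ge_cases X ((k + 1) * Y)) as [| Hbig]; [lia | exfalso].
    assert (((k + 1) * Y) ^ 2 <= X ^ 2) by (apply Z.pow_le_mono_l; nia).
    assert (((k + 1) * Y) ^ 2 = (k ^ 2 + 1) * Y ^ 2 + 2 * (k * Y ^ 2)) by ring.
    lia.
  - rewrite Z.abs_neq by lia.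
    destruct (Z.lt_ge_cases ((k - 1) * Y) X) as [| Hsmallx]; [lia | exfalso].
    assert (X ^ 2 <= ((k - 1) * Y) ^ 2) by (apply Z.pow_le_mono_l; lia).
    assert (((k - 1) * Y) ^ 2 = (k ^ 2 + 1) * Y ^ 2 - 2 * (k * Y ^ 2)) by ring.
    lia.
Qed.

Lemma small_pell_norm_is_unit_nonneg (Y : Z) : 0 <= Y -> forall X,
  Z.gcd X Y = 1 -> Z.abs (pell_norm k X Y) <= k -> Z.abs (pell_norm k X Y) = 1.
Proof.
  induction Y as [Y IH] using (well_founded_induction (Zwf_well_founded 0)).
  intros HY X Hg Hsmall.
  destruct (Z.eq_dec Y 0) as [-> | HYnz].
  - rewrite Z.gcd_0_r in Hg. unfold pell_norm.
    rewrite (Z.pow_even_abs X 2), Hg by (exists 1; reflexivity). now rewrite Z.mul_0_r.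
  - rewrite <- (pell_norm_abs k X Y), (Z.abs_eq Y) in Hsmall |- * by exact HY.
    rewrite <- Z.gcd_abs_l in Hg.
    pose proof (descend_shrinks (Z.abs X) Y ltac:(lia) ltac:(lia) Hsmall) as Hlt.
    assert (Hnorm : pell_norm k (descend_X (Z.abs X) Y) (Z.abs (descend_Y (Z.abs X) Y))
                    = - pell_norm k (Z.abs X) Y).
    { rewrite <- pell_norm_abs, Z.abs_idemp, pell_norm_abs. apply pell_norm_descend. }
    rewrite <- (Z.abs_opp (pell_norm k _ _)), <- Hnorm in Hsmall |- *.
    apply (IH (Z.abs (descend_Y (Z.abs X) Y))); [unfold Zwf; lia | lia | | exact Hsmall].
    rewrite Z.gcd_abs_r. now apply gcd_descend.
Qed.

Lemma small_pell_norm_is_unit (X Y : Z) :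
  Z.gcd X Y = 1 -> Z.abs (pell_norm k X Y) <= k -> Z.abs (pell_norm k X Y) = 1.
Proof.
  intros Hg Hsmall.
  assert (Habs : pell_norm k X (Z.abs Y) = pell_norm k X Y).
  { rewrite <- pell_norm_abs, Z.abs_idemp. apply pell_norm_abs. }
  rewrite <- Habs in Hsmall |- *. rewrite <- Z.gcd_abs_r in Hg.
  apply small_pell_norm_is_unit_nonneg; auto. lia.
Qed.

End PellDescent.

Lemma difference_of_squares (f f' x y : Z) :
  pell_norm (f * f') x y = f' ^ 2 ->
  (x - y) * (x + y) = f' ^ 2 * (1 + f ^ 2 * y ^ 2).
Proof. unfold pell_norm; intros HE. nia. Qed.

Lemma odd_prime_not_divides_both (p x y : Z) :
  prime p -> p <> 2 -> Z.gcd x y = 1 -> ~ (p | x - y) \/ ~ (p | x + y).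
Proof.
  intros Hp Hp2 Hg.
  destruct (Zdivide_dec p (x - y)) as [Hm|Hm]; [|now left].
  destruct (Zdivide_dec p (x + y)) as [Hs|Hs]; [|now right].
  exfalso.
  assert (Hp1 : 1 < p) by (destruct Hp; auto).
  assert (Hp2n : ~ (p | 2)).
  { intro Hd. apply Z.divide_pos_le in Hd; lia. }
  assert (Hx : (p | x)).
  { assert (H2x : (p | 2 * x)).
    { replace (2 * x) with ((x - y) + (x + y)) by ring. now apply Z.divide_add_r. }
    destruct (prime_mult p Hp 2 x H2x); tauto. }
  assert (Hy : (p | y)).
  { assert (H2y : (p | 2 * y)).
    { replace (2 * y) with ((x + y) - (x - y)) by ring. now apply Z.divide_sub_r. }
    destruct (prime_mult p Hp 2 y H2y); tauto. }
  assert (Hd1 : (p | 1)) by (rewrite <- Hg; now apply Z.gcd_greatest).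
  apply Z.divide_pos_le in Hd1; lia.
Qed.

Lemma odd_prime_power_divides_one_factor (p n x y : Z) :
  prime p -> p <> 2 -> 0 <= n -> Z.gcd x y = 1 -> (p ^ n | (x - y) * (x + y)) ->
  exists y', Z.abs y' = Z.abs y /\ (p ^ n | x - y').
Proof.
  intros Hp Hp2 Hn Hg Hdiv.
  assert (Hcop : forall u, ~ (p | u) -> rel_prime (p ^ n) u).
  { intros u Hu. apply rel_prime_sym, rel_prime_Zpower_r; [exact Hn |].
    now apply rel_prime_sym, prime_rel_prime. }
  destruct (odd_prime_not_divides_both p x y Hp Hp2 Hg) as [Hm | Hs].
  - exists (- y). split; [apply Z.abs_opp |].
    replace (x - - y) with (x + y) by ring.
    apply Gauss with (x - y); auto.
  - exists y. split; [reflexivity |].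
    apply Gauss with (x + y); auto. now rewrite Z.mul_comm.
Qed.

Lemma descended_solution (f f' x y t : Z) :
  f' <> 0 -> Z.gcd x y = 1 -> pell_norm (f * f') x y = f' ^ 2 ->
  x - y = t * f' ^ 2 ->
  Z.gcd (f ^ 2 * y - t) t = 1 /\ pell_norm (f * f') (f ^ 2 * y - t) t = - f ^ 2.
Proof.
  intros Hf' Hg HE Ht.
  assert (Hcofactor : t * (x + y) = 1 + f ^ 2 * y ^ 2).
  { apply (Z.mul_reg_l _ _ (f' ^ 2)); [now apply Z.pow_nonzero |].
    rewrite <- (difference_of_squares f f' x y HE), Ht. ring. }
  split.
  - apply Z.gcd_unique; [lia | apply Z.divide_1_l | apply Z.divide_1_l |].
    intros d H1 H2.
    assert (Hd : (d | f ^ 2 * y)).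
    { replace (f ^ 2 * y) with ((f ^ 2 * y - t) + t) by ring.
      now apply Z.divide_add_r. }
    assert (Hd2 : (d | 1 + f ^ 2 * y ^ 2)).
    { rewrite <- Hcofactor. now apply Z.divide_mul_l. }
    replace 1 with ((1 + f ^ 2 * y ^ 2) - (f ^ 2 * y) * y) by ring.
    apply Z.divide_sub_r; [exact Hd2 | now apply Z.divide_mul_l].
  - replace x with (y + t * f' ^ 2) in Hcofactor by lia.
    unfold pell_norm. nia.
Qed.

Lemma prime_divisor_of_odd (p m : Z) : Z.odd m = true -> (p | m) -> p <> 2.
Proof.
  intros Hodd [c Hc] ->. rewrite Hc, Z.odd_mul in Hodd. simpl in Hodd.
  now rewrite Bool.andb_false_r in Hodd.
Qed.

Theorem lemma3p3 (k f f' : Z) :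
  0 < k -> Z.odd k = true ->
  0 < f -> 0 < f' -> k = f * f' -> 1 < f -> f < k ->
  (exists x y : Z, Z.gcd x y = 1 /\ x ^ 2 - (k ^ 2 + 1) * y ^ 2 = f' ^ 2) ->
  ~ is_prime_power f'.
Proof.
  intros Hk Hodd Hf Hf' Hkf Hf1 Hfk [x [y [Hg HE]]] [p [a [Hp [Ha Hpa]]]].
  fold (pell_norm k x y) in HE. subst k.
  assert (Hf'1 : 1 < f') by nia.
  destruct (Z.le_gt_cases f' f) as [Hle | Hlt].
  - (* f'^2 <= k is a small norm, hence f'^2 = 1. *)
    pose proof (small_pell_norm_is_unit (f * f') ltac:(lia) x y Hg) as Hunit.
    rewrite HE, Z.abs_eq in Hunit by nia. specialize (Hunit ltac:(nia)). nia.
  - (* f'^2 divides x - y' for y' = +-y; descend to a solution of norm -f^2. *)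
    assert (Hp2 : p <> 2).
    { apply (prime_divisor_of_odd p (f * f') Hodd). apply Z.divide_mul_r.
      rewrite Hpa, <- (Z.sub_add 1 a), Z.pow_add_r, Z.pow_1_r by lia.
      apply Z.divide_mul_r, Z.divide_refl. }
    assert (Hsq : f' ^ 2 = p ^ (2 * a)) by (rewrite Hpa, <- Z.pow_mul_r; f_equal; lia).
    destruct (odd_prime_power_divides_one_factor p (2 * a) x y Hp Hp2 ltac:(lia) Hg)
      as [y' [Hy' [t Ht]]].
    { rewrite <- Hsq, (difference_of_squares f f' x y HE). apply Z.divide_mul_l, Z.divide_refl. }
    rewrite <- Hsq in Ht.
    rewrite <- Z.gcd_abs_r, <- Hy', Z.gcd_abs_r in Hg.
    rewrite <- pell_norm_abs, <- Hy', pell_norm_abs in HE.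
    destruct (descended_solution f f' x y' t ltac:(lia) Hg HE Ht) as [Hg' HE'].
    pose proof (small_pell_norm_is_unit (f * f') ltac:(lia) _ _ Hg') as Hunit.
    rewrite HE', Z.abs_opp, Z.abs_eq in Hunit by nia. specialize (Hunit ltac:(nia)). nia.
Qed.
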